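(* Let $G$ be a finite group. Then there exist a finite group $\widetilde G$ and a surjective group homomorphism $\varphi \colon \widetilde G \to G$ such that for any two subgroups $G_1, G_2 \le G$ that are not conjugate in $G$, the pre-images $\varphi^{-1}(G_1)$ and $\varphi^{-1}(G_2)$ are not isomorphic (as abstract groups). *)

From mathcomp Require Import all_boot all_fingroup.
Set Implicit Arguments. Unset Strict Implicit. Unset Printing Implicit Defensive.

From mathcomp Require Import all_boot all_fingroup all_solvable.
Set Implicit Arguments. Unset Strict Implicit. Unset Printing Implicit Defensive.
Local Open Scope group_scope.

(* Let G act by right multiplication on the disjoint union of the coset spaces
   H\G, H <= G.  Attach to each coset Hg a block of n_H points, with the n_H
   pairwise distinct and larger than |G| + 4, and let N be the direct product of
   the alternating groups of these blocks.  G permutes the blocks, and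
   Gtilde = N ><| G maps onto G with kernel N, so the preimage of H <= G is
   N ><| H.  The simple normal subgroups of N ><| H of order larger than |G| are
   exactly the factors Alt(n_K) on the blocks of the cosets Kg fixed by H, i.e.
   with H <= K^g.  An isomorphism between the preimages of G1 and G2 therefore
   carries the factor on the coset G1 to a factor Alt(n_G1) on a coset G1 g
   fixed by G2, so G2 <= G1^g, with equality since |G1| = |G2|. *)

Section EmbedPerm.
Variables (T W : finType) (e : T -> W) (d : W -> option T).
Hypotheses (eK : pcancel e d) (dK : ocancel d e).

Definition embed_perm_fun (s : {perm T}) w := if d w is Some t then e (s t) else w.

Lemma embed_perm_funK s : cancel (embed_perm_fun s) (embed_perm_fun s^-1).
Proof.
move=> w; rewrite /embed_perm_fun; case dw: (d w) => [t|]; last by rewrite dw.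
by rewrite eK permK; have := dK w; rewrite dw.
Qed.

Definition embed_perm s := perm (can_inj (embed_perm_funK s)).

Lemma embed_permE s w : embed_perm s w = embed_perm_fun s w.
Proof. by rewrite permE. Qed.

Lemma embed_perm_in s t : embed_perm s (e t) = e (s t).
Proof. by rewrite embed_permE /embed_perm_fun eK. Qed.

Lemma embed_perm_out s w : d w = None -> embed_perm s w = w.
Proof. by rewrite embed_permE /embed_perm_fun => ->. Qed.

Lemma embed_permM : {morph embed_perm : s t / s * t}.
Proof.
move=> s t; apply/permP => w; rewrite permM !embed_permE /embed_perm_fun.
by case dw: (d w) => [u|]; rewrite ?dw // eK permM.
Qed.

Canonical embed_perm_morphism := @Morphism _ _ setT embed_perm (in2W embed_permM).

Lemma injm_embed_perm : 'injm embed_perm_morphism.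
Proof.
apply/injmP => s t _ _ /= est; apply/permP => u.
by apply: (pcan_inj eK); rewrite -!embed_perm_in est.
Qed.

End EmbedPerm.

Lemma card_Alt_ord_ge n : 2 < n -> n <= #|'Alt_('I_n)|.
Proof.
move=> lt2n; rewrite -(@leq_pmul2l 2) //.
have n_gt1 : 1 < #|'I_n| by rewrite card_ord ltnW.
rewrite (card_Alt n_gt1) card_ord.
case: n lt2n {n_gt1} => // n lt2n; rewrite factS mulnC leq_mul2l.
by apply/orP; right; apply: leq_trans (fact_geq n).
Qed.

Lemma card_Alt_ord_inj m n :
  1 < m -> 1 < n -> #|'Alt_('I_m)| = #|'Alt_('I_n)| -> m = n.
Proof.
move=> m_gt1 n_gt1 eqAlt.
have fact_Alt k : 1 < k -> k`! = (2 * #|'Alt_('I_k)|)%N.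
  by move=> k_gt1; rewrite card_Alt card_ord.
have eq_fact : m`! = n`! by rewrite (fact_Alt m) // (fact_Alt n) // eqAlt.
have pos k : 1 < k -> k \in [pred k | 0 < k] by move/ltnW.
apply/eqP; rewrite eqn_leq -(leq_pfact (pos _ m_gt1) (pos _ n_gt1)).
by rewrite -(leq_pfact (pos _ n_gt1) (pos _ m_gt1)) eq_fact leqnn.
Qed.

Lemma center_Alt (T : finType) : 4 < #|T| -> 'Z('Alt_T) = 1.
Proof.
move=> T_gt4; have [_ /(_ _ (center_normal _))] := simpleP _ (simple_Alt5 T_gt4).
by case=> // /center_idP/abelian_sol; rewrite solvable_AltF.
Qed.

Lemma simple_normal_eq_factor (gT : finGroupType) (I : finType) (A : {set I})
    (S : I -> {group gT}) (K N M : {group gT}) :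
  N :=: <<\bigcup_(i in A) S i>> -> N <| K -> 'Z(N) = 1 ->
  {in A, forall i, simple (S i)} -> {in A, forall i, S i <| N} ->
  M <| K -> simple M -> #|K : N| < #|M| ->
  exists2 i, i \in A & M :=: S i.
Proof.
move=> defN /andP[sNK nNK] trivZN simS nSN /andP[sMK nMK] simM ltKN_M.
have [ntM simM'] := simpleP _ simM.
have sSN i : i \in A -> S i \subset N by move/nSN/normal_sub.
have nSiN i : i \in A -> N \subset 'N(S i) by move/nSN/normal_norm.
have sMN : M \subset N.
  have nMN : M :&: N <| M by rewrite /normal subsetIl normsI ?normG ?(subset_trans sMK).
  have [trivMN|/setIidPl//] := simM' _ nMN; move: ltKN_M.
  rewrite ltnNge -(@leq_pmul2l #|N|) // Lagrange // mulnC -TI_cardMg //.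
  by rewrite subset_leq_card // mul_subG.
case: (boolP [exists i in A, M :&: S i != 1]) => [/exists_inP[i Ai ntMSi]|].
  have nMS : M :&: S i <| M.
    by rewrite /normal subsetIl normsI ?normG // (subset_trans sMN) ?nSiN.
  have [/eqP|/setIidPl sMS] := simM' _ nMS; first by rewrite (negPf ntMSi).
  have nMS' : M <| S i.
    by rewrite /normal sMS (subset_trans _ nMK) // (subset_trans _ sNK) ?sSN.
  have [_ simS'] := simpleP _ (simS i Ai).
  have [trivM|] := simS' M nMS'; last by exists i.
  by rewrite trivM eqxx in ntM.
move/exists_inPn => trivMS.
suff : M \subset 'Z(N) by rewrite trivZN subG1 (negPf ntM).
rewrite subsetI sMN centsC defN gen_subG; apply/bigcupsP => i Ai.
apply/commG1P; apply/eqP; rewrite -subG1 -(eqP (negbNE (trivMS i Ai))) setIC.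
rewrite commg_subI // subsetI ?normG ?subxx //.
  by rewrite (subset_trans _ nMK) // (subset_trans _ sNK) ?sSN.
by rewrite (subset_trans sMN) ?nSiN.
Qed.

Lemma astab1Rs_rcoset (gT : finGroupType) (H : {group gT}) g : 'C[H :* g | 'Rs] = H :^ g.
Proof. by have := astab1_act 'Rs H g; rewrite astab1Rs /= rcosetE. Qed.

Section Construction.
Variables (gT : finGroupType) (G : {group gT}).

Definition label := ({set gT} * {set gT})%type.

(* Distinct subgroups get blocks of distinct sizes, and the offset |G| + 5
   makes each alternating group simple and larger than G. *)
Definition deg (x : label) := #|G| + 5 + enum_rank x.1.
Definition max_deg := #|G| + 5 + #|{set gT}|.
Definition point := (label * 'I_max_deg)%type.

Lemma deg_le_max x : deg x <= max_deg.
Proof. by rewrite /deg leq_add2l ltnW. Qed.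

Lemma deg_gt4 x : 4 < deg x.
Proof. by rewrite /deg -addnA addnCA leq_addr. Qed.

Lemma deg_gtG x : #|G| < deg x.
Proof. by rewrite /deg -addnA -addSnnS leq_addr. Qed.

(* The block of x is {x} * 'I_(deg x); the points (x, i) with deg x <= i are padding. *)
Definition in_block x (j : 'I_(deg x)) : point := (x, widen_ord (deg_le_max x) j).
Definition of_block x (w : point) : option 'I_(deg x) :=
  if w.1 == x then insub (val w.2) else None.

Lemma in_blockK x : pcancel (@in_block x) (of_block x).
Proof. by move=> j; rewrite /of_block eqxx valK. Qed.

Lemma of_blockK x : ocancel (of_block x) (@in_block x).
Proof.
case=> y i; rewrite /of_block /=; case: eqP => //= <-.
by case: insubP => //= j _ ij; congr (_, _); apply: val_inj.
Qed.

Definition block_perm x := embed_perm_morphism (@in_blockK x) (@of_blockK x).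
Definition Alt_block x := (block_perm x @* 'Alt_('I_(deg x)))%G.

Lemma block_perm_label x s w : (block_perm x s w).1 = w.1.
Proof.
have := of_blockK x w; rewrite /= embed_permE /embed_perm_fun.
by case: (of_block x w) => //= j <-.
Qed.

Lemma block_perm_out x s w : w.1 != x -> block_perm x s w = w.
Proof. by move=> wx; rewrite /= embed_perm_out // /of_block (negPf wx). Qed.

Lemma Alt_block_fix x : Alt_block x \subset 'C([set w | w.1 != x] | 'P).
Proof.
apply/subsetP => _ /morphimP[s _ _ ->]; apply/astabP => w.
by rewrite inE; apply: block_perm_out.
Qed.

Lemma Alt_block_cent x y : x != y -> Alt_block x \subset 'C(Alt_block y).
Proof.
move=> neq_xy; apply/centsP => _ /morphimP[s _ _ ->] _ /morphimP[t _ _ ->].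
apply/permP => w; rewrite !permM.
have [wx|wx] := eqVneq w.1 x.
  have wy : w.1 != y by rewrite wx.
  by rewrite (block_perm_out _ wy) block_perm_out // block_perm_label wx.
by rewrite (block_perm_out _ wx) [RHS]block_perm_out // block_perm_label.
Qed.

Lemma Alt_block_isog x : 'Alt_('I_(deg x)) \isog Alt_block x.
Proof. exact/sub_isog/injm_embed_perm/subsetT. Qed.

Lemma simple_Alt_block x : simple (Alt_block x).
Proof.
by rewrite -(isog_simple (Alt_block_isog x)); apply: simple_Alt5; rewrite card_ord deg_gt4.
Qed.

Lemma card_Alt_block x : #|Alt_block x| = #|'Alt_('I_(deg x))|.
Proof. exact/esym/card_isog/Alt_block_isog. Qed.

Lemma Alt_block_gtG x : #|G| < #|Alt_block x|.
Proof.
rewrite card_Alt_block (leq_trans (deg_gtG x)) // card_Alt_ord_ge //.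
exact: ltn_trans (deg_gt4 x).
Qed.

Lemma card_Alt_block_inj x y : #|Alt_block x| = #|Alt_block y| -> x.1 = y.1.
Proof.
have deg_gt1 z : 1 < deg z by apply: ltn_trans (deg_gt4 z).
rewrite !card_Alt_block => /(card_Alt_ord_inj (deg_gt1 x) (deg_gt1 y)) /eqP.
by rewrite eqn_add2l => /eqP /val_inj /enum_rank_inj.
Qed.

Lemma center_Alt_block x : 'Z(Alt_block x) = 1.
Proof.
rewrite /= -injm_center ?subsetT ?injm_embed_perm // center_Alt ?morphim1 //.
by rewrite card_ord deg_gt4.
Qed.

Lemma Alt_block_inj x y : Alt_block x :=: Alt_block y -> x = y.
Proof.
move=> eqAlt; apply/eqP; apply: contraT => neq_xy.
suff trivA : Alt_block x :=: 1.
  by have := Alt_block_gtG x; rewrite trivA cards1 ltnNge cardG_gt0.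
apply/trivgP/subsetP => _ /[dup] /morphimP[s _ _ ->] Ss; apply/set1gP.
suff -> : s = 1 by rewrite morph1.
have /astabP fix_x : block_perm x s \in 'C([set w | w.1 != y] | 'P).
  by rewrite (subsetP (Alt_block_fix y)) // -eqAlt.
apply/permP => j; apply: (pcan_inj (@in_blockK x)).
rewrite perm1 -(embed_perm_in (@in_blockK x) (@of_blockK x) s).
by apply: (fix_x (in_block j)); rewrite inE.
Qed.

Definition label_act (x : label) g : label := (x.1, x.2 :* g).

Lemma label_act1 : label_act^~ 1 =1 id.
Proof. by case=> H C; rewrite /label_act /= mulg1. Qed.

Lemma label_actM x : act_morph label_act x.
Proof. by move=> g h; rewrite /label_act /= rcosetM. Qed.

Canonical label_action := TotalAction label_act1 label_actM.

Definition point_act (w : point) g : point := (label_act w.1 g, w.2).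

Lemma point_act1 : point_act^~ 1 =1 id.
Proof. by case=> x i; rewrite /point_act label_act1. Qed.

Lemma point_actM w : act_morph point_act w.
Proof. by move=> g h; rewrite /point_act label_actM. Qed.

Canonical point_action := TotalAction point_act1 point_actM.

Definition shift := actperm_morphism point_action.

Lemma shiftE g w : shift g w = point_act w g.
Proof. exact: actpermE. Qed.

Lemma max_deg_gt0 : 0 < max_deg.
Proof. by rewrite /max_deg addn_gt0 addnS. Qed.

(* set0 is not a group, so pt0 lies in no labelled block. *)
Definition pt0 : point := ((set0, [set 1]), Ordinal max_deg_gt0).

Lemma shift_pt0 g : shift g pt0 = pt0 -> g = 1.
Proof.
rewrite shiftE => -[] /setP/(_ g).
by rewrite mem_rcoset !inE mulgV eqxx => /esym/eqP.
Qed.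

Lemma injm_shift : 'injm shift.
Proof.
apply/subsetP => g /(kerP _ (in_setT g))/permP/(_ pt0).
by rewrite perm1 => /shift_pt0->; apply: group1.
Qed.

Lemma of_block_act x g w : of_block (label_act x g) (point_act w g) = of_block x w.
Proof. by rewrite /of_block /= (inj_eq (act_inj label_action g)). Qed.

Lemma block_perm_shift x g s :
  block_perm x s ^ shift g = block_perm (label_act x g) s.
Proof.
apply/permP => w; rewrite conjgE -morphV ?inE // !permM !shiftE /= !embed_permE.
rewrite /embed_perm_fun -(of_block_act x g) (actKV point_action).
case: (of_block _ w) => [t|] /=; last exact: (actKV point_action).
by congr (_, _); apply: val_inj.
Qed.

Lemma Alt_block_shift x g : Alt_block x :^ shift g = Alt_block (label_act x g).
Proof.
rewrite /= !morphimE /conjugate -imset_comp.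
by apply: eq_imset => s; apply: block_perm_shift.
Qed.

(* The pairs (H, Hg) with H <= G and g in G index the disjoint union of the H\G. *)
Definition labels :=
  [set x : label | [&& group_set x.1, x.1 \subset G & x.2 \in rcosets x.1 G]].

Lemma label_act_labels x g : x \in labels -> g \in G -> label_act x g \in labels.
Proof.
rewrite !inE /= => /and3P[-> -> /rcosetsP[a aG ->]] gG /=.
by apply/rcosetsP; exists (a * g); rewrite ?groupM // rcosetM.
Qed.

Definition base := <<\bigcup_(x in labels) Alt_block x>>%G.

Lemma Alt_block_sub_base x : x \in labels -> Alt_block x \subset base.
Proof. by move=> xl; apply/sub_gen/(bigcup_sup x xl). Qed.

Lemma Alt_block_normal_base x : x \in labels -> Alt_block x <| base.
Proof.
move=> xl; rewrite /normal Alt_block_sub_base //= gen_subG.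
apply/bigcupsP => y _; have [->|neq_yx] := eqVneq y x; first exact: normG.
exact/cents_norm/Alt_block_cent.
Qed.

Lemma base_fix_unlabeled : base \subset 'C([set w | w.1 \notin labels] | 'P).
Proof.
rewrite gen_subG; apply/bigcupsP => x xl.
apply: subset_trans (Alt_block_fix x) (astabS _ _).
by apply/subsetP => w; rewrite !inE; apply: contraNneq => ->; rewrite inE in xl.
Qed.

Lemma shift_norm_base : shift @* G \subset 'N(base).
Proof.
apply/subsetP => _ /morphimP[g _ gG ->]; rewrite inE -genJ genS //.
apply/subsetP => _ /imsetP[v /bigcupP[x xl Sv] ->].
apply/bigcupP; exists (label_act x g); first exact: label_act_labels.
by rewrite -Alt_block_shift memJ_conjg.
Qed.

Lemma base_TI_shift : base :&: shift @* G = 1.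
Proof.
apply/trivgP/subsetP => r /setIP[rN /morphimP[g _ _ def_r]].
have pt0_unlabeled : pt0 \in [set w | w.1 \notin labels] by rewrite !inE /= /group_set inE.
have := astabP (subsetP base_fix_unlabeled r rN) pt0 pt0_unlabeled.
by rewrite def_r => /shift_pt0->; rewrite morph1.
Qed.

Lemma center_base : 'Z(base) = 1.
Proof.
apply/trivgP/subsetP => z /centerP[zN cNz]; apply/set1gP/permP => w; rewrite perm1.
have [wl|] := boolP (w.1 \in labels); last first.
  by move=> wu; apply: (astabP (subsetP base_fix_unlabeled z zN)); rewrite inE.
set x := w.1 in wl *.
pose N' := <<\bigcup_(y in labels :\ x) Alt_block y>>.
have cN' : N' \subset 'C(Alt_block x).
  by rewrite gen_subG; apply/bigcupsP => y /setD1P[neq_yx _]; apply: Alt_block_cent.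
have fixN' : N' \subset 'C([set v | v.1 == x] | 'P).
  rewrite gen_subG; apply/bigcupsP => y /setD1P[neq_yx _].
  apply: subset_trans (Alt_block_fix y) (astabS _ _).
  by apply/subsetP => v; rewrite !inE => /eqP->; rewrite eq_sym.
have splitN : base \subset Alt_block x * N'.
  rewrite -cent_joinEr // gen_subG; apply/bigcupsP => y yl.
  have [->|neq_yx] := eqVneq y x; first exact: joing_subl.
  apply: subset_trans (joing_subr _ _); apply/sub_gen/(bigcup_sup y).
  by rewrite in_setD1 neq_yx.
have /mulsgP[s t Ss N't def_z] := subsetP splitN z zN.
suff s1 : s = 1 by rewrite def_z s1 mul1g; apply: (astabP (subsetP fixN' t N't)); rewrite inE.
apply/set1gP; rewrite -(center_Alt_block x); apply/centerP; split=> // a Aa.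
have cza : commute z a by apply: cNz; apply: subsetP (Alt_block_sub_base wl) a Aa.
have cta : commute t a by apply: (centP (subsetP cN' t N't)).
by apply: (mulIg t); rewrite -mulgA -cta mulgA -def_z cza def_z mulgA.
Qed.

Lemma sdprod_base_shift : base ><| shift @* G = base <*> shift @* G.
Proof. exact: sdprodEY shift_norm_base base_TI_shift. Qed.

Definition Gtilde := (base <*> shift @* G)%G.

Lemma Gtilde_mul : Gtilde :=: base * shift @* G.
Proof. exact/norm_joinEr/shift_norm_base. Qed.

Definition unshift := restrm (morphimS shift (subsetT G)) (invm injm_shift).

Lemma unshift_act : {in base & shift @* G, morph_act 'J 'J (@triv_morph _ gT base) unshift}.
Proof. by move=> n r _ _; rewrite /= /trivm conj1g. Qed.

Definition proj : {morphism Gtilde >-> gT} := sdprodm_morphism sdprod_base_shift unshift_act.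

Lemma projE n g : n \in base -> g \in G -> proj (n * shift g) = g.
Proof.
move=> nN gG; rewrite /= sdprodmE ?mem_morphim ?inE //.
by rewrite /= /trivm mul1g; apply: (invmE injm_shift (in_setT g)).
Qed.

Lemma morphpre_proj (H : {group gT}) : H \subset G -> proj @*^-1 H = base * shift @* H.
Proof.
move=> sHG; apply/setP => v; apply/morphpreP/idP => [[vG]|].
  have : v \in base * shift @* G by rewrite -Gtilde_mul.
  case/mulsgP => n _ nN /morphimP[g _ gG ->] ->.
  by rewrite projE // => gH; rewrite mem_mulg ?mem_morphim ?inE.
case/mulsgP => n _ nN /morphimP[g _ gH ->] ->.
have gG := subsetP sHG g gH.
by rewrite projE // Gtilde_mul mem_mulg ?mem_morphim ?inE.
Qed.

Lemma im_proj : proj @* Gtilde = G.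
Proof.
apply/eqP; rewrite eqEsubset; apply/andP; split.
  apply/subsetP => _ /morphimP[v _ vG ->].
  have : v \in base * shift @* G by rewrite -Gtilde_mul.
  by case/mulsgP=> n _ nN /morphimP[g _ gG ->] ->; rewrite projE.
apply/subsetP => g gG.
have sgG : 1 * shift g \in Gtilde by rewrite Gtilde_mul mem_mulg ?mem_morphim ?inE.
by apply/morphimP; exists (1 * shift g); rewrite ?projE.
Qed.

Lemma ker_proj : 'ker proj = base.
Proof. by rewrite kerE morphpre_proj ?sub1G // morphim1 mulg1. Qed.

Lemma simple_normal_morphpre_proj (H : {group gT}) (M : {group {perm point}}) :
  H \subset G -> M <| proj @*^-1 H -> simple M -> #|G| < #|M| ->
  exists2 x, x \in labels & M :=: Alt_block x.
Proof.
move=> sHG nMK simM ltGM; apply: (simple_normal_eq_factor (N := base)) nMK simM _.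
- by [].
- by rewrite -ker_proj ker_normal_pre.
- exact: center_base.
- by move=> x _; apply: simple_Alt_block.
- exact: Alt_block_normal_base.
rewrite -ker_proj kerE index_morphpre ?im_proj ?sub1G // indexg1.
exact: leq_ltn_trans (subset_leq_card sHG) ltGM.
Qed.

Lemma Alt_block_normal_morphpre_proj x (H : {group gT}) : x \in labels -> H \subset G ->
  (Alt_block x <| proj @*^-1 H) = (H \subset 'C[x.2 | 'Rs]).
Proof.
move=> xl sHG; apply/idP/idP => [/andP[_ nAK] | sHC].
  apply/subsetP => h hH; apply/astab1P; rewrite /= rcosetE.
  have shK : shift h \in proj @*^-1 H.
    by rewrite morphpre_proj // -[shift h]mul1g mem_mulg ?mem_morphim ?inE.
  have := normP (subsetP nAK _ shK); rewrite Alt_block_shift => /Alt_block_inj.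
  by move/(congr1 snd).
have sAK : Alt_block x \subset proj @*^-1 H.
  by apply: subset_trans (Alt_block_sub_base xl) _; rewrite -ker_proj ker_sub_pre.
have nA_shift : shift @* H \subset 'N(Alt_block x).
  apply/subsetP => _ /morphimP[h _ hH ->]; apply/normP; rewrite Alt_block_shift.
  have /astab1P/= := subsetP sHC h hH; rewrite rcosetE /label_act => ->.
  by rewrite -surjective_pairing.
by rewrite /normal sAK morphpre_proj // mul_subG // (normal_norm (Alt_block_normal_base xl)).
Qed.

End Construction.

Theorem theorem1p1 (gT : finGroupType) (G : {group gT}) :
  exists (hT : finGroupType) (Gt : {group hT}) (phi : {morphism Gt >-> gT}),
    phi @* Gt = G /\
    forall G1 G2 : {group gT}, G1 \subset G -> G2 \subset G ->
      ~ (exists2 x, x \in G & G2 :=: G1 :^ x) ->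
      ~ (phi @*^-1 G1 \isog phi @*^-1 G2).
Proof.
exists _, (Gtilde G), (proj G); split; first exact: im_proj.
move=> G1 G2 sG1G sG2G not_conj /isogP[f injf im_f]; apply: not_conj.
have card_G12 : #|G1| = #|G2|.
  apply/eqP; rewrite -(eqn_pmul2l (cardG_gt0 (base G))) -(ker_proj G).
  by rewrite -!card_morphpre ?im_proj // -im_f card_injm.
pose x1 : label gT := (G1 : {set gT}, G1 : {set gT}).
have nA1 : Alt_block G x1 <| proj G @*^-1 G1.
  rewrite Alt_block_normal_morphpre_proj ?astab1Rs // inE groupP sG1G /=.
  by apply/rcosetsP; exists 1; rewrite ?rcoset1.
have sA1 := normal_sub nA1.
have [y yl def_fA1] : exists2 y, y \in labels G & f @* Alt_block G x1 :=: Alt_block G y.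
  apply: (simple_normal_morphpre_proj sG2G).
  - by rewrite -im_f morphim_normal.
  - by rewrite -(isog_simple (sub_isog sA1 injf)) simple_Alt_block.
  - by rewrite card_injm // Alt_block_gtG.
have y1 : y.1 = G1.
  apply/esym/(@card_Alt_block_inj _ G x1).
  by rewrite -def_fA1 (card_injm injf sA1).
have nAy : Alt_block G y <| proj G @*^-1 G2 by rewrite -def_fA1 -im_f morphim_normal.
rewrite Alt_block_normal_morphpre_proj // in nAy.
move: yl; rewrite inE y1 => /and3P[_ _ /rcosetsP[g gG def_y2]].
exists g => //; apply/eqP.
by rewrite eqEcard cardJg card_G12 leqnn andbT -astab1Rs_rcoset -def_y2.
Qed.
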